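(* Let $(\mathcal{C},\mathcal{B},Q,S)$ be an STV election, counted by the procedure described in the context, and let $w\neq l$ be candidates. If $L_{\mathrm{basic}}(w)>U_{\mathrm{comp}}(l,w)$ (the assertion $\mathsf{AG}(w,l)$), then $l$ cannot be seated when $w$ is not seated.
   Context: An STV election is a tuple $(\mathcal{C},\mathcal{B},Q,S)$ where $\mathcal{C}$ is a finite set of candidates, $\mathcal{B}$ is a multiset of ballots (each ballot is a finite sequence of distinct candidates, in order of preference, most preferred first, not necessarily containing all candidates), $S$ is the number of seats, and $Q=\lfloor |\mathcal{B}|/(S+1)\rfloor+1$ is the quota. For a sequence $\pi$, $\mathrm{first}(\pi)$ is its first element, and for a set $X$ of candidates, $\sigma_X(\pi)$ is the subsequence of $\pi$ consisting of the elements of $X$, in their original order. Counting: every ballot starts with value $1$ and is placed in the pile of its first-ranked candidate; a candidate's tally is the total value of the ballots in its pile. A candidate is eligible if neither eliminated nor seated. In each round every eligible candidate with tally at least $Q$ is seated (gets a quota), and the ballots in its pile get a reduced transfer value (e.g. unweighted Gregory: $(V_c-Q)/|\mathcal{B}_c|$, with $V_c$ the total value and $|\mathcal{B}_c|$ the number of ballots in its pile) and move to the next-ranked eligible candidate on each ballot (or are exhausted). If no candidate reaches a quota, the eligible candidate with smallest tally is eliminated and its ballots move at their current value to their next-ranked eligible candidate (or are exhausted). Counting stops when all $S$ seats are filled or the number of eligible candidates equals the number of unfilled seats, in which case all remaining eligible candidates are seated. ''Seated'' covers both ways of obtaining a seat. Definitions: $L_{\mathrm{basic}}(c)=|\{\beta\in\mathcal{B}:\mathrm{first}(\beta)=c\}|$;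 $U_{\mathrm{comp}}(c,c')=|\{\beta\in\mathcal{B}:\mathrm{first}(\sigma_{\{c,c'\}}(\beta))=c\}|$, counted with multiplicity. *)

From HB Require Import structures.
From mathcomp Require Import all_boot all_order all_algebra.
Set Implicit Arguments. Unset Strict Implicit. Unset Printing Implicit Defensive.
Import Order.TTheory GRing.Theory Num.Theory.

(* A ballot is a sequence of candidates (required distinct in the theorem);
   the multiset of ballots is a seq of ballots (multiplicity = repetition). *)
Definition ballot (C : finType) := seq C.

(* State of the count: seated set, eliminated set, and, for each ballot
   (parallel to the ballot list), its current pile (None = exhausted)
   and its current value. *)
Record stv_state (C : finType) := STVState {
  seated : {set C};
  elim   : {set C};
  piles  : seq (option C * rat) }.

Definition eligible (C : finType) (st : stv_state C) : {set C} :=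
  ~: (seated st :|: elim st).

Definition quota (C : finType) (B : seq (ballot C)) (S : nat) : nat :=
  (size B %/ S.+1).+1.

Definition tally (C : finType) (st : stv_state C) (c : C) : rat :=
  (\sum_(p <- piles st | p.1 == Some c) p.2)%R.

Definition pile_size (C : finType) (st : stv_state C) (c : C) : nat :=
  count (fun p : option C * rat => p.1 == Some c) (piles st).

Definition next_cand (C : finType) (b : ballot C) (c : C) (E : {set C})
  : option C :=
  ohead [seq x <- drop (index c b).+1 b | x \in E].

Definition initial_state (C : finType) (B : seq (ballot C)) : stv_state C :=
  STVState set0 set0 [seq (ohead b, 1%R : rat) | b <- B].

Definition quota_set (C : finType) (B : seq (ballot C)) (S : nat)
  (st : stv_state C) : {set C} :=
  [set c in eligible st | ((quota B S)%:R <= tally st c)%R].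

(* seating round, unweighted Gregory transfer value (V_c - Q)/|B_c| *)
Definition seat_round (C : finType) (B : seq (ballot C)) (S : nat)
  (st : stv_state C) : stv_state C :=
  let W := quota_set B S st in
  let E' := eligible st :\: W in
  STVState (seated st :|: W) (elim st)
    [seq match bp.2.1 with
         | Some c =>
             if c \in W then
               (next_cand bp.1 c E',
                ((tally st c - (quota B S)%:R) / (pile_size st c)%:R)%R)
             else bp.2
         | None => bp.2
         end
    | bp <- zip B (piles st)].

Definition elim_round (C : finType) (B : seq (ballot C))
  (st : stv_state C) (e : C) : stv_state C :=
  let E' := eligible st :\ e in
  STVState (seated st) (e |: elim st)
    [seq match bp.2.1 with
         | Some c => if c == e then (next_cand bp.1 c E', bp.2.2) else bp.2
         | None => bp.2
         end
    | bp <- zip B (piles st)].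

(* One step of the count (nondeterministic only in the choice among
   eligible candidates of smallest tally). The count continues only while
   fewer than S seats are filled. *)
Inductive stv_step (C : finType) (B : seq (ballot C)) (S : nat)
  : stv_state C -> stv_state C -> Prop :=
| StepFinal st :
    #|seated st| < S ->
    #|eligible st| = S - #|seated st| ->
    stv_step B S st (STVState (seated st :|: eligible st) (elim st) (piles st))
| StepSeat st :
    #|seated st| < S ->
    #|eligible st| <> S - #|seated st| ->
    quota_set B S st != set0 ->
    stv_step B S st (seat_round B S st)
| StepElim st e :
    #|seated st| < S ->
    #|eligible st| <> S - #|seated st| ->
    quota_set B S st = set0 ->
    e \in eligible st ->
    (forall c, c \in eligible st -> (tally st e <= tally st c)%R) ->
    stv_step B S st (elim_round B st e).

Inductive stv_reachable (C : finType) (B : seq (ballot C)) (S : nat)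
  : stv_state C -> Prop :=
| ReachInit : stv_reachable B S (initial_state B)
| ReachStep st st' :
    stv_reachable B S st -> stv_step B S st st' -> stv_reachable B S st'.

Definition L_basic (C : finType) (B : seq (ballot C)) (c : C) : nat :=
  count (fun b : ballot C => ohead b == Some c) B.

Definition U_comp (C : finType) (B : seq (ballot C)) (c c' : C) : nat :=
  count (fun b : ballot C => ohead [seq x <- b | x \in [:: c; c']] == Some c) B.

(* Invariant of the count: every ballot carries a value in [0, 1], a ballot
   on a pile sits on a candidate preceded on the ballot only by candidates
   that are no longer eligible, and a ballot whose first preference is still
   eligible still sits on that pile with value 1.  Hence, while w and l are both
   eligible, tally w >= L_basic w > U_comp l w >= tally l: a ballot on l's pile
   ranks l above w.  So l cannot reach the quota while w does not, w cannot be
   eliminated before l, and a final seating that takes l also takes w. *)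
From Pilot Require Import Defs.
From mathcomp Require Import all_boot all_order all_algebra.
Set Implicit Arguments. Unset Strict Implicit. Unset Printing Implicit Defensive.
Import Order.TTheory GRing.Theory Num.Theory.
(* Shadow [seq.tally] by the tally of the count. *)
Import Pilot.Defs.
Local Open Scope ring_scope.

Lemma zip_map_zip (A D : Type) (f : A * D -> D) (s : seq A) (t : seq D) :
  zip s [seq f p | p <- zip s t] = [seq (p.1, f p) | p <- zip s t].
Proof. by elim: s t => [|x s IH] [|y t] //=; rewrite IH. Qed.

Lemma natr_count (R : pzSemiRingType) (T : Type) (a : pred T) (s : seq T) :
  (count a s)%:R = \sum_(x <- s) (a x)%:R :> R.
Proof. by rewrite -sumn_count sumnE big_map natr_sum. Qed.

Lemma ohead_filter_Some (T : eqType) (a : pred T) (s : seq T) x :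
  ohead (filter a s) = Some x ->
  exists pre suf, s = pre ++ x :: suf /\ all (predC a) pre.
Proof.
elim: s => [|y s IH] //=; case: ifP => ay /=.
  by case=> <-; exists [::], s.
by case/IH=> pre [suf [-> pre_a]]; exists (y :: pre), suf; rewrite /= ay.
Qed.

Section Ballots.

Variable C : finType.
Implicit Types (E : {set C}) (b : ballot C).

Definition reaches E b c :=
  exists pre suf, b = pre ++ c :: suf /\ all (fun x => x \notin E) pre.

Lemma reaches_sub E E' b c : E' \subset E -> reaches E b c -> reaches E' b c.
Proof.
move=> sE [pre [suf [-> preE]]]; exists pre, suf; split=> //.
by apply/allP=> x /(allP preE); apply: contra; apply: (subsetP sE).
Qed.

Lemma reaches_cons E b x c : x \notin E -> reaches E b c -> reaches E (x :: b) c.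
Proof. by move=> xE [pre [suf [-> preE]]]; exists (x :: pre), suf; rewrite /= xE. Qed.

Lemma reaches_next_cand E b c c' :
  c \notin E -> reaches E b c -> next_cand b c E = Some c' -> reaches E b c'.
Proof.
move=> cE [pre [suf [-> {b}]]]; rewrite /next_cand.
have from_head s : ohead [seq x <- drop (index c (c :: s)).+1 (c :: s) | x \in E]
    = Some c' -> reaches E (c :: s) c'.
  rewrite /= eqxx drop0 => /ohead_filter_Some [t [s' [-> tE]]].
  by exists (c :: t), s'; rewrite /= cE.
elim: pre => [_|x pre IH /andP [xE preE]]; first exact: from_head.
have [->|xc] := eqVneq x c; first exact: from_head.
by rewrite /= (negbTE xc) => /(IH preE); apply: reaches_cons.
Qed.

Lemma reaches_pair_first E b l w :
  l \in E -> w \in E -> reaches E b l -> ohead [seq x <- b | x \in [:: l; w]] = Some l.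
Proof.
move=> lE wE [pre [suf [-> preE]]].
have : ~~ has (mem [:: l; w]) pre.
  rewrite -all_predC; apply/allP=> x /(allP preE) /=.
  by rewrite !inE; apply: contra => /orP [] /eqP ->.
by rewrite has_filter negbK filter_cat => /eqP -> /=; rewrite !inE eqxx.
Qed.

End Ballots.

Section Count.

Variables (C : finType) (B : seq (ballot C)) (S : nat).
Implicit Types (E : {set C}) (st : stv_state C).

Definition pile_ok E (bp : ballot C * (option C * rat)) : Prop :=
  [/\ 0 <= bp.2.2 <= 1,
      forall c, bp.2.1 = Some c -> reaches E bp.1 c &
      forall c, ohead bp.1 = Some c -> c \in E -> bp.2 = (Some c, 1)].

Lemma pile_ok_sub E E' bp : E' \subset E -> pile_ok E bp -> pile_ok E' bp.
Proof.
move=> sE [v01 bp_reaches bp_first]; split=> // [c /bp_reaches|c /bp_first first_c cE'].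
  exact: reaches_sub.
exact/first_c/(subsetP sE).
Qed.

Lemma pile_ok_move E E' b c v v' :
  E' \subset E -> c \notin E' -> 0 <= v' <= 1 ->
  pile_ok E (b, (Some c, v)) -> pile_ok E' (b, (next_cand b c E', v')).
Proof.
move=> sE cE' v'01 [_ /= b_reaches b_first]; split=> //= [c'|c' first_c' c'E'].
  exact/reaches_next_cand/(reaches_sub sE)/b_reaches.
by case: (b_first c' first_c' (subsetP sE _ c'E')) cE' => -> _; rewrite c'E'.
Qed.

Record sound st : Prop := Sound {
  size_piles : size (piles st) = size B;
  piles_ok : forall bp, bp \in zip B (piles st) -> pile_ok (eligible st) bp }.

Lemma sound_pile_value st p : sound st -> p \in piles st -> 0 <= p.2 <= 1.
Proof.
case=> hs ok; rewrite -[piles st](unzip2_zip (s := B)) ?hs //.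
by case/mapP=> bp /ok [] ? _ _ ->.
Qed.

Lemma tallyE st c : sound st ->
  tally st c = \sum_(bp <- zip B (piles st)) (if bp.2.1 == Some c then bp.2.2 else 0).
Proof.
by case=> hs _; rewrite /tally -{1}[piles st](unzip2_zip (s := B)) ?hs // big_map big_mkcond.
Qed.

Lemma count_ballotsE st (a : pred (ballot C)) : sound st ->
  (count a B)%:R = \sum_(bp <- zip B (piles st)) (a bp.1)%:R :> rat.
Proof.
by case=> hs _; rewrite -{1}[B](unzip1_zip (t := piles st)) ?hs // count_map natr_count.
Qed.

Lemma L_basic_le_tally st c :
  sound st -> c \in eligible st -> (L_basic B c)%:R <= tally st c.
Proof.
move=> sst cE; rewrite (tallyE c sst) /L_basic (count_ballotsE _ sst).
rewrite big_seq [leRHS]big_seq.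
apply: ler_sum => bp /(piles_ok sst) [/andP [v0 _] _ first_c] /=.
by case: eqP => [/first_c -> //=|_]; rewrite ?eqxx //; case: ifP.
Qed.

Lemma tally_le_U_comp st c c' : sound st ->
  c \in eligible st -> c' \in eligible st -> tally st c <= (U_comp B c c')%:R.
Proof.
move=> sst cE c'E; rewrite (tallyE c sst) /U_comp (count_ballotsE _ sst).
rewrite big_seq [leRHS]big_seq.
apply: ler_sum => bp /(piles_ok sst) [/andP [_ v1] reaches_c _] /=.
by case: eqP => [/reaches_c /(reaches_pair_first cE c'E) ->|_]; rewrite ?eqxx.
Qed.

Lemma tally_le_pile_size st c : sound st -> tally st c <= (pile_size st c)%:R.
Proof.
move=> sst; rewrite /tally /pile_size -sum1_count natr_sum big_seq_cond [leRHS]big_seq_cond.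
by apply: ler_sum => p /andP [/(sound_pile_value sst) /andP []].
Qed.

Lemma transfer_value_bounds st c : sound st -> c \in quota_set B S st ->
  0 <= (tally st c - (quota B S)%:R) / (pile_size st c)%:R <= 1.
Proof.
move=> sst; rewrite inE => /andP [_ quota_le].
have tally_le := tally_le_pile_size c sst.
rewrite divr_ge0 ?subr_ge0 ?ler0n //=.
have [->|size_gt0] := posnP (pile_size st c); first by rewrite invr0 mulr0.
by rewrite ler_pdivrMr ?ltr0n // mul1r lerBlDr (le_trans tally_le) ?lerDl.
Qed.

Lemma in_eligible st x :
  (x \in eligible st) = (x \notin seated st) && (x \notin elim st).
Proof. by rewrite !inE negb_or. Qed.

Lemma eligible_seat_round st :
  eligible (seat_round B S st) = eligible st :\: quota_set B S st.
Proof.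
apply/setP=> x; rewrite !in_eligible !inE.
by case: (x \in seated st) (x \in elim st) (_ <= _).
Qed.

Lemma eligible_elim_round st e : eligible (elim_round B st e) = eligible st :\ e.
Proof.
apply/setP=> x; rewrite !in_eligible /= !inE.
by rewrite !negb_or andbCA.
Qed.

Lemma sound_update st st' (g : ballot C * (option C * rat) -> option C * rat) :
  piles st' = [seq g bp | bp <- zip B (piles st)] ->
  (forall bp, bp \in zip B (piles st) ->
     pile_ok (eligible st) bp -> pile_ok (eligible st') (bp.1, g bp)) ->
  sound st -> sound st'.
Proof.
move=> piles' g_ok [hs ok]; split; first by rewrite piles' size_map size_zip hs minnn.
by rewrite piles' zip_map_zip => _ /mapP [bp bp_in ->]; apply/g_ok/ok.
Qed.

Lemma sound_initial : sound (initial_state B).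
Proof.
split; first by rewrite size_map.
rewrite /= -{1}[B]map_id zip_map => _ /mapP [b _ ->].
split=> //= [c|c ->]; last by [].
by case: b => //= x s [<-]; exists [::], s.
Qed.

Lemma sound_step st st' : stv_step B S st st' -> sound st -> sound st'.
Proof.
case=> {st st'} [st _ _ [hs ok]|st _ _ _ sst|st e _ _ _ _ _ sst].
- split=> // bp /ok; apply: pile_ok_sub.
  by apply/subsetP=> x; rewrite !in_eligible /= inE negb_or -andbA => /and3P [-> _ ->].
- apply: (sound_update _ _ sst); first reflexivity.
  move=> -[b [[c|] v]] _ bp_ok /=; rewrite eligible_seat_round;
    last exact: pile_ok_sub (subsetDl _ _) bp_ok.
  case: ifP => cW; last exact: pile_ok_sub (subsetDl _ _) bp_ok.
  apply: pile_ok_move bp_ok; [exact: subsetDl | by rewrite inE cW |].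
  exact: transfer_value_bounds.
- apply: (sound_update _ _ sst); first reflexivity.
  move=> -[b [[c|] v]] _ bp_ok /=; rewrite eligible_elim_round;
    last exact: pile_ok_sub (subsetDl _ _) bp_ok.
  case: eqP => [<-|_]; last exact: pile_ok_sub (subsetDl _ _) bp_ok.
  apply: pile_ok_move (bp_ok); [exact: subsetDl | by rewrite setD11 | by case: bp_ok].
Qed.

Lemma sound_reachable st : stv_reachable B S st -> sound st.
Proof.
elim=> [|st0 st1 _ sound_st0 step]; first exact: sound_initial.
exact: sound_step step sound_st0.
Qed.

End Count.

Section AlwaysGreater.

Variables (C : finType) (B : seq (ballot C)) (S : nat) (w l : C).
Hypothesis AG : (U_comp B l w < L_basic B w)%N.
Implicit Types st : stv_state C.

Lemma tally_l_lt_w st : sound B st ->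
  w \in eligible st -> l \in eligible st -> tally st l < tally st w.
Proof.
move=> sst wE lE; apply: le_lt_trans (tally_le_U_comp sst lE wE) _.
by apply: lt_le_trans (L_basic_le_tally sst wE); rewrite ltr_nat.
Qed.

Definition ahead st : bool :=
  ((l \in seated st) ==> (w \in seated st)) && ((w \in elim st) ==> (l \in elim st)).

Lemma ahead_eligible st :
  ahead st -> l \in eligible st -> w \notin seated st -> w \in eligible st.
Proof.
case/andP=> _ w_elim; rewrite !in_eligible => /andP [_ l_elim] ->.
exact: contra (implyP w_elim) l_elim.
Qed.

Lemma ahead_final st : ahead st ->
  ahead (STVState (seated st :|: eligible st) (elim st) (piles st)).
Proof.
rewrite /ahead /= inE in_eligible inE in_eligible.
by case: (l \in seated st); case: (w \in seated st);
  case: (l \in elim st); case: (w \in elim st).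
Qed.

Lemma ahead_seat_round st : sound B st -> ahead st -> ahead (seat_round B S st).
Proof.
move=> sst ah; have /andP [l_seated w_elim] := ah.
rewrite /ahead /= w_elim andbT !in_setU.
apply/implyP=> /orP [/(implyP l_seated) -> //|].
rewrite in_set => /andP [lE l_quota].
have [//|ws /=] := boolP (w \in seated st).
have wE := ahead_eligible ah lE ws.
by rewrite in_set wE (le_trans l_quota) // ltW // tally_l_lt_w.
Qed.

Lemma ahead_elim_round st e : sound B st -> ahead st ->
  e \in eligible st -> (forall c, c \in eligible st -> tally st e <= tally st c) ->
  ahead (elim_round B st e).
Proof.
move=> sst /andP [l_seated w_elim] eE e_min.
rewrite /ahead /= l_seated !in_setU1.
apply/implyP=> /orP [/eqP we|/(implyP w_elim) ->]; last by rewrite orbT.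
subst e; have [l_elim|l_notelim] := boolP (l \in elim st); first by apply/orP; right.
have lE : l \in eligible st.
  rewrite in_eligible l_notelim andbT; apply: contraL eE => /(implyP l_seated).
  by rewrite in_eligible => ->.
by have := tally_l_lt_w sst eE lE; rewrite ltNge e_min.
Qed.

Lemma ahead_step st st' :
  sound B st -> stv_step B S st st' -> ahead st -> ahead st'.
Proof.
move=> sst step; case: step sst => {st st'} [st _ _ _|st _ _ _|st e _ _ _].
- exact: ahead_final.
- exact: ahead_seat_round.
- by move=> eE e_min sst ah; apply: ahead_elim_round.
Qed.

Lemma ahead_reachable st : stv_reachable B S st -> ahead st.
Proof.
elim=> [|st0 st1 reach0 ah0 step]; first by rewrite /ahead /= !inE.
exact: ahead_step (sound_reachable reach0) step ah0.
Qed.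

End AlwaysGreater.

Local Close Scope ring_scope.

Theorem corollary1 (C : finType) (B : seq (ballot C)) (S : nat) (w l : C) :
  all (fun b : ballot C => uniq b) B ->
  w != l ->
  L_basic B w > U_comp B l w ->
  forall st : stv_state C, stv_reachable B S st ->
    l \in seated st -> w \in seated st.
Proof.
move=> _ _ AG st /(ahead_reachable AG) /andP [l_seated _].
exact/implyP.
Qed.
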